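(* Let $n\ge k\ge 1$ and let $\mathbf{M}$ be a $k\times n$ binary matrix all of whose rows have Hamming weight exactly $n-k+1$ and which satisfies the MDS Condition. For $i\in[k]$ let $Z_i=\{j\in[n]: m_{i,j}=0\}$ (so $|Z_i|=k-1$). Suppose that the family $(Z_1,\ldots,Z_k)$ has a unique multiset union. Then for every prime power $q\geq n+k-1$ there exists an $[n,k]_q$ MDS code having a generator matrix that fits $\mathbf{M}$. In particular, if every family of $(k-1)$-subsets $Z_1,\dots,Z_k$ of $[n]$ satisfying $|\bigcap_{i\in I}Z_i|\le k-|I|$ for all nonempty $I\subseteq[k]$ (for all $n\ge k\ge1$) has a unique multiset union, then for all such $\mathbf{M}$ and all prime powers $q\ge n+k-1$ such an MDS code exists.
   Context: $[n]=\{1,\ldots,n\}$. For a $k\times n$ binary matrix $\mathbf{M}=(m_{i,j})$ with rows $\mathbf{M}_i$, ${\sf supp}(\mathbf{M}_i)=\{j: m_{i,j}\ne 0\}$; $\mathbf{M}$ satisfies the MDS Condition if $|\bigcup_{i\in I}{\sf supp}(\mathbf{M}_i)|\ge n-k+|I|$ for all nonempty $I\subseteq[k]$. A matrix $\mathbf{G}=(g_{i,j})\in\mathbb{F}_q^{k\times n}$ fits $\mathbf{M}$ if $g_{i,j}=0$ whenever $m_{i,j}=0$. An $[n,k]_q$ MDS code is a $k$-dimensional linear code in $\mathbb{F}_q^n$ with minimum distance $n-k+1$. Multiset unions: given $(k-1)$-subsets $Z_1,\ldots,Z_k$ of $[n]$, a choice is a pair $(\sigma,(S_1,\ldots,S_k))$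 where $\sigma$ is a permutation of $[k]$ and $S_i\subseteq Z_i$ with $|S_i|=\sigma(i)-1$ for each $i$; its multiset union is the multiset $S_1\uplus\cdots\uplus S_k$ (multiplicity of $j$ = number of $i$ with $j\in S_i$). The family $(Z_1,\ldots,Z_k)$ has a unique multiset union if there is a multiset that arises as the multiset union of exactly one choice. *)

(* Indices [n] = 'I_n (0-based), [k] = 'I_k. *)
From HB Require Import structures.
From mathcomp Require Import all_boot all_order all_algebra all_fingroup.
Set Implicit Arguments. Unset Strict Implicit. Unset Printing Implicit Defensive.
Import GRing.Theory.
Local Open Scope ring_scope.

Definition supp_row (k n : nat) (M : 'M[bool]_(k, n)) (i : 'I_k) : {set 'I_n} :=
  [set j | M i j].

Definition zero_row (k n : nat) (M : 'M[bool]_(k, n)) (i : 'I_k) : {set 'I_n} :=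
  [set j | ~~ M i j].

Definition MDS_condition (k n : nat) (M : 'M[bool]_(k, n)) : Prop :=
  forall I : {set 'I_k}, I != set0 ->
    (n - k + #|I| <= #|\bigcup_(i in I) supp_row M i|)%N.

Definition fits (F : fieldType) (k n : nat) (G : 'M[F]_(k, n)) (M : 'M[bool]_(k, n)) : Prop :=
  forall i j, ~~ M i j -> G i j = 0.

Definition hweight (F : fieldType) (n : nat) (v : 'rV[F]_n) : nat :=
  #|[set j : 'I_n | v 0 j != 0]|.

(* G (k x n) generates an [n,k] MDS code: its rows are linearly independent
   (so the code, its row space, has dimension k) and the minimum distance of the
   linear code {u G}, i.e. the least weight of a nonzero codeword, is n-k+1. *)
Definition MDS_generator (F : fieldType) (k n : nat) (G : 'M[F]_(k, n)) : Prop :=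
  row_free G /\
  (forall c : 'rV[F]_n, (c <= G)%MS -> c != 0 -> (n - k + 1 <= hweight c)%N) /\
  (exists2 c : 'rV[F]_n, (c <= G)%MS /\ c != 0 & hweight c = (n - k + 1)%N).

(* A choice (sigma, (S_1..S_k)) for the family Z: sigma a permutation of [k],
   S_i subset of Z_i with |S_i| = sigma(i) - 1 (0-based: |S_i| = val (sigma i)). *)
Definition valid_choice (k n : nat) (Z : 'I_k -> {set 'I_n})
  (sigma : 'S_k) (S : {ffun 'I_k -> {set 'I_n}}) : Prop :=
  forall i, S i \subset Z i /\ #|S i| = val (sigma i).

Definition mult_union (k n : nat) (S : {ffun 'I_k -> {set 'I_n}}) (j : 'I_n) : nat :=
  #|[set i : 'I_k | j \in S i]|.

Definition unique_multiset_union (k n : nat) (Z : 'I_k -> {set 'I_n}) : Prop :=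
  exists (sigma : 'S_k) (S : {ffun 'I_k -> {set 'I_n}}),
    valid_choice Z sigma S /\
    forall (sigma' : 'S_k) (S' : {ffun 'I_k -> {set 'I_n}}),
      valid_choice Z sigma' S' -> mult_union S' =1 mult_union S ->
      sigma' = sigma /\ S' = S.

From HB Require Import structures.
From mathcomp Require Import all_boot all_order all_algebra all_fingroup all_field.
From mathcomp Require Import mpoly zify.
From Stdlib Require Import Lia.
Set Implicit Arguments. Unset Strict Implicit. Unset Printing Implicit Defensive.
Import GRing.Theory.
Local Open Scope ring_scope.

(* For points
   al : [n] -> F consider the matrix G with G_ij = prod_(z in Z_i) (al_j - al_z):
   it vanishes on Z_i, and expanding the product over subsets shows
   G = C(al) * V(al), where V(al) is a signed Vandermonde matrix and C(al) is
   the evaluation at al of the k x k matrix esym_matrix whose (i, s) entry is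
   the degree-s elementary symmetric polynomial in the variables of Z_i.
   1. By Leibniz' formula, det esym_matrix is a signed sum of the monomials
      x^(S_1 ⊎ ... ⊎ S_k) of all choices; the monomial of the unique choice
      cannot cancel, so the determinant is a nonzero polynomial, and each
      variable has degree at most k - 1 in it.
   2. An Alon-type nonvanishing argument (induction on the variables that
      occur) gives distinct points al with det C(al) != 0 as soon as
      |F| >= n + k - 1.
   3. Then a nonzero codeword u * G = (u * C(al)) * V(al) lists the values at
      distinct points of a nonzero polynomial of degree < k, so it has at most
      k - 1 zeros; a general criterion turns this into the MDS property.
   The second part of the theorem follows because the MDS Condition on M is
   exactly the intersection condition on the family (Z_i). *)

Section VariableCoefficients.
Variables (R : comNzRingType) (n : nat).

Definition drop_var (j : 'I_n) (m : 'X_{1..n}) : 'X_{1..n} :=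
  [multinom (if i == j then 0%N else m i) | i < n].

(* The coefficient of x_j^t in p, when p is viewed as a polynomial in x_j
   whose coefficients are polynomials in the other variables. *)
Definition coef_var (p : {mpoly R[n]}) (j : 'I_n) (t : nat) : {mpoly R[n]} :=
  \sum_(m <- msupp p | m j == t) p@_m *: 'X_[drop_var j m].

Definition var_degree_le (d : nat) (p : {mpoly R[n]}) : Prop :=
  forall m, m \in msupp p -> forall j, (m j <= d)%N.

Definition vars_in (A : {set 'I_n}) (p : {mpoly R[n]}) : Prop :=
  forall m, m \in msupp p -> forall j, j \notin A -> m j = 0%N.

Lemma meval_coef_var_indep p j t (v w : 'I_n -> R) :
  (forall i, i != j -> v i = w i) -> (coef_var p j t).@[v] = (coef_var p j t).@[w].
Proof.
move=> Evw; rewrite !rmorph_sum; apply: eq_bigr => m _ /=.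
rewrite !mevalZ !mevalX; congr (_ * _); apply: eq_bigr => i _.
by rewrite mnmE; case: eqVneq => [_|/Evw ->]; rewrite ?expr0.
Qed.

Lemma meval_expand_var p j d (v : 'I_n -> R) : var_degree_le d p ->
  p.@[v] = \sum_(t < d.+1) (coef_var p j t).@[v] * v j ^+ t.
Proof.
move=> Hd.
under eq_bigr => t _ do rewrite rmorph_sum big_distrl /= big_mkcond /=.
rewrite mevalE exchange_big /= big_seq [RHS]big_seq.
apply: eq_bigr => m Hm.
have Hmj : (m j < d.+1)%N by rewrite ltnS Hd.
rewrite [RHS](bigD1 (Ordinal Hmj)) //= eqxx [X in _ = _ + X]big1; last first.
  move=> t Ht; rewrite ifF //; apply/negbTE; apply: contra Ht => /eqP E.
  by apply/eqP/val_inj; rewrite /= E.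
rewrite addr0 mevalZ mevalX -mulrA; congr (_ * _).
rewrite (bigD1 j) //= [in RHS](bigD1 j) //= mnmE eqxx expr0 mul1r mulrC.
by congr (_ * _); apply: eq_bigr => i Hi; rewrite mnmE (negbTE Hi).
Qed.

Lemma msupp_coef_var p j t m' : m' \in msupp (coef_var p j t) ->
  exists2 m, m \in msupp p & m' = drop_var j m.
Proof.
move/msupp_sum_le; case/flattenP => s /mapP [m]; rewrite mem_filter.
case/andP => _ Hm -> /msuppZ_le; rewrite msuppX inE => /eqP ->.
by exists m.
Qed.

Lemma var_degree_le_coef_var d p j t :
  var_degree_le d p -> var_degree_le d (coef_var p j t).
Proof.
move=> Hd m' /msupp_coef_var [m Hm ->] i; rewrite mnmE.
by case: eqP => // _; apply: Hd.
Qed.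

Lemma vars_in_coef_var A p j t : vars_in A p -> vars_in (A :\ j) (coef_var p j t).
Proof.
move=> HA m' /msupp_coef_var [m Hm ->] i; rewrite !inE negb_and negbK mnmE.
by case: eqVneq => //= _; apply: HA.
Qed.

(* A monomial m of p survives in the coefficient of x_j^(m j), with the same
   coefficient; in particular that coefficient polynomial is nonzero. *)
Lemma coef_var_neq0 p j m : m \in msupp p -> coef_var p j (m j) != 0.
Proof.
move=> Hm; suff E : (coef_var p j (m j))@_(drop_var j m) = p@_m.
  by apply: contraTneq Hm => C; rewrite mcoeff_msupp -E C mcoeff0 eqxx.
rewrite raddf_sum /=.
under eq_bigr => m' _ do rewrite mcoeffZ mcoeffX.
rewrite (big_rem m) //= !eqxx mulr1 big1_seq ?addr0 // => m'.
case/andP => /eqP Hm'j Hm'; case: eqVneq => [E|]; last by rewrite mulr0.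
suff Em : m' = m by move: Hm'; rewrite Em (mem_rem_uniq _ (msupp_uniq p)) inE eqxx.
apply/mnmP => i; case: (eqVneq i j) => [-> //|Hi].
by move/mnmP: E => /(_ i); rewrite !mnmE (negbTE Hi).
Qed.

End VariableCoefficients.

Lemma exists_nonroot_avoiding (R : finIdomainType) (g : {poly R}) (B : {set R}) :
  g != 0 -> ((size g).-1 + #|B| < #|R|)%N -> exists2 y, ~~ root g y & y \notin B.
Proof.
move=> g0 HB.
suff /exists_inP [y] : [exists y in ~: B, ~~ root g y] by rewrite inE => yB gy; exists y.
apply: contraTT HB => /exists_inPn Hroots; rewrite -leqNgt.
set Rt := [set y | root g y].
have HRt : (#|Rt| <= (size g).-1)%N.
  have Ha : all (root g) (enum Rt) by apply/allP => y; rewrite mem_enum inE.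
  by have := max_poly_roots g0 Ha (enum_uniq _); rewrite -cardE; case: (size g).
have Hcover : (#|R| <= #|Rt :|: B|)%N.
  rewrite -cardsT; apply: subset_leq_card; apply/subsetP => y _.
  rewrite !inE orbC; case: (boolP (y \in B)) => //= yB.
  by have := Hroots y; rewrite inE yB negbK; apply.
have := (leq_card_setU Rt B).1; lia.
Qed.

Section NonvanishingAtDistinctPoints.
Variables (F : finFieldType) (n : nat).

Lemma injective_points : (n <= #|F|)%N -> exists v : 'I_n -> F, injective v.
Proof.
move=> Hn; exists (fun i => enum_val (widen_ord Hn i)).
by move=> i1 i2 /enum_val_inj /(congr1 val) /= /val_inj.
Qed.

Lemma meval_vars_in0 (p : {mpoly F[n]}) (v : 'I_n -> F) :
  p != 0 -> vars_in set0 p -> p.@[v] != 0.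
Proof.
move=> p0 Hp; have supp0 m : m \in msupp p -> m = 0%MM.
  by move=> Hm; apply/mnmP => j; rewrite mnm0E (Hp m Hm j) ?inE.
have -> : p = (p@_0)%:MP.
  apply/mpolyP => m; rewrite mcoeffC; case: (eqVneq m 0%MM) => [-> | m0].
    by rewrite mulr1.
  by rewrite mulr0; apply/eqP; rewrite mcoeff_eq0; apply: contra m0 => /supp0 ->.
rewrite mevalC -mcoeff_msupp -(supp0 _ (mlead_supp p0)).
exact: mlead_supp.
Qed.

(* Inductive step: a nonvanishing value of some coefficient of x_j^t can be
   extended to a nonvanishing value of p by choosing a fresh value for x_j. *)
Lemma extend_nonvanishing d (p : {mpoly F[n]}) j t (v : 'I_n -> F) :
  (d + n <= #|F|)%N -> var_degree_le d p -> (t <= d)%N -> injective v ->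
  (coef_var p j t).@[v] != 0 -> exists w : 'I_n -> F, injective w /\ p.@[w] != 0.
Proof.
move=> HF Hd td vi Hv.
pose g : {poly F} := \poly_(s < d.+1) (coef_var p j s).@[v].
have g0 : g != 0.
  apply: contra Hv => /eqP /(congr1 (fun r : {poly F} => r`_t)).
  by rewrite coef_poly coef0 ltnS td => ->.
have Hroom : ((size g).-1 + #|v @: [set~ j]| < #|F|)%N.
  have Hg : ((size g).-1 <= d)%N.
    by have := size_poly d.+1 (fun s => (coef_var p j s).@[v]); rewrite -/g; case: (size g).
  have := leq_imset_card v [set~ j]; rewrite cardsC1 card_ord.
  move: Hg HF; have := ltn_ord j; lia.
have [y gy yB] := exists_nonroot_avoiding g0 Hroom.
pose w i := if i == j then y else v i.
exists w; split.
  move=> i1 i2; rewrite /w.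
  case: (eqVneq i1 j) => [->|H1]; case: (eqVneq i2 j) => [->|H2] // E.
  - by move: yB; rewrite E imset_f // !inE.
  - by move: yB; rewrite -E imset_f // !inE.
  - exact: vi.
rewrite (meval_expand_var j w Hd); apply: contra gy => /eqP E.
rewrite /root horner_poly; apply/eqP; rewrite -[RHS]E /w eqxx.
apply: eq_bigr => s _; congr (_ * _).
by apply: meval_coef_var_indep => i Hi; rewrite (negbTE Hi).
Qed.

Lemma nonvanishing_at_distinct_points d (p : {mpoly F[n]}) :
  (d + n <= #|F|)%N -> p != 0 -> var_degree_le d p ->
  exists v : 'I_n -> F, injective v /\ p.@[v] != 0.
Proof.
move=> HF p0 Hd.
have [v0 v0i] : exists v : 'I_n -> F, injective v by apply: injective_points; lia.
suff from_vars : forall A (q : {mpoly F[n]}), q != 0 -> var_degree_le d q -> vars_in A q ->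
    exists v : 'I_n -> F, injective v /\ q.@[v] != 0.
  by apply: (from_vars setT) => // m _ j; rewrite inE.
move=> A; have [N] := ubnP #|A|; elim: N A => // N IH A ltAN {}p {}p0 {}Hd HA.
have [A0 | [j jA]] := set_0Vmem A.
  by exists v0; split => //; apply: meval_vars_in0 => //; rewrite -A0.
have pm := mlead_supp p0; set m := mlead p in pm.
have [v [vi Hv]] : exists v : 'I_n -> F, injective v /\ (coef_var p j (m j)).@[v] != 0.
  apply: (IH (A :\ j)); first by move: ltAN; rewrite (cardsD1 j A) jA.
  - exact: coef_var_neq0.
  - exact: var_degree_le_coef_var.
  - exact: vars_in_coef_var.
exact: extend_nonvanishing HF Hd (Hd m pm j) vi Hv.
Qed.

End NonvanishingAtDistinctPoints.

Lemma prod_subr_subsets (R : comNzRingType) (I : finType) (A : {set I}) (a : R) (b : I -> R) :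
  \prod_(i in A) (a - b i) =
  \sum_(S : {set I} | S \subset A) (-1) ^+ #|S| * a ^+ (#|A| - #|S|) * \prod_(i in S) b i.
Proof.
rewrite big_mkcond /=.
rewrite (eq_bigr (fun i => (if i \in A then - b i else 0) + (if i \in A then a else 1)));
  last by move=> i _; case: (i \in A); rewrite ?add0r // addrC.
rewrite bigA_distr (bigID (fun S : {set I} => S \subset A)) /= [X in _ + X]big1 ?addr0; last first.
  by move=> J /subsetPn [i iJ iA]; rewrite (bigD1 i) //= iJ (negbTE iA) mul0r.
apply: eq_bigr => J JA; rewrite (bigID (fun i => i \in J)) /=.
rewrite (eq_bigr (fun i => - b i)); last by move=> i iJ; rewrite iJ (subsetP JA).
rewrite prodrN (eq_bigr (fun i => if i \in A :\: J then a else 1)); last first.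
  by move=> i iJ; rewrite (negbTE iJ) inE iJ.
rewrite -big_mkcondr /= [X in _ * X = _](eq_bigl (fun i => i \in A :\: J)); last first.
  by move=> i /=; rewrite !inE; case: (i \in J).
rewrite prodr_const cardsD (setIidPr JA).
by rewrite -!mulrA [_ * a ^+ _]mulrC.
Qed.

Section EsymMatrix.
Variables (R : comNzRingType) (k n : nat) (Z : 'I_k -> {set 'I_n}).

Definition esym_matrix : 'M[{mpoly R[n]}]_k :=
  \matrix_(i, s) \sum_(S : {set 'I_n} | (S \subset Z i) && (#|S| == s)) 'X_[mesym1 S].

Definition choice_family (sigma : 'S_k) (i : 'I_k) : pred {set 'I_n} :=
  fun S => (S \subset Z i) && (#|S| == sigma i).

Lemma choice_familyP sigma (S : {ffun 'I_k -> {set 'I_n}}) :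
  reflect (valid_choice Z sigma S) (S \in family (choice_family sigma)).
Proof.
apply: (iffP familyP) => H i; move: (H i); rewrite /choice_family unfold_in /=.
  by case/andP => -> /eqP.
by case=> -> ->; rewrite eqxx.
Qed.

Definition union_monomial (S : {ffun 'I_k -> {set 'I_n}}) : 'X_{1..n} :=
  (\sum_i mesym1 (S i))%MM.

Lemma union_monomialE S j : union_monomial S j = mult_union S j.
Proof.
rewrite /union_monomial mnm_sumE /mult_union -sum1_card [RHS]big_mkcond /=.
by apply: eq_bigr => i _; rewrite /mesym1 mnmE inE; case: (j \in S i).
Qed.

(* Leibniz expansion: the determinant is the signed sum of the monomials of all
   choices. *)
Lemma det_esym_matrix : \det esym_matrix =
  \sum_(sigma : 'S_k) \sum_(S in family (choice_family sigma))
    (-1) ^+ sigma * 'X_[union_monomial S].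
Proof.
apply: eq_bigr => sigma _; under eq_bigr => i _ do rewrite mxE.
rewrite (bigA_distr_big_dep (choice_family sigma)) big_distrr /=.
by apply: eq_bigr => S _; rewrite mprodXE.
Qed.

Lemma mcoeff_signed_monomial (b : bool) (m m' : 'X_{1..n}) :
  ((-1) ^+ b * 'X_[m] : {mpoly R[n]})@_m' = (-1) ^+ b * (m == m')%:R.
Proof. by rewrite !mulr_sign; case: b; rewrite ?mcoeffN mcoeffX. Qed.

(* The monomial of the unique choice cannot cancel, so the determinant is a
   nonzero polynomial. *)
Lemma det_esym_matrix_neq0 : unique_multiset_union Z -> \det esym_matrix != 0.
Proof.
case=> sigma0 [S0 [V0 U]].
suff E : (\det esym_matrix)@_(union_monomial S0) = (-1) ^+ sigma0.
  by apply/eqP => D; move: E; rewrite D mcoeff0 => /eqP; rewrite eq_sym signr_eq0.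
have other sigma S : valid_choice Z sigma S -> union_monomial S = union_monomial S0 ->
    sigma = sigma0 /\ S = S0.
  by move=> VS E; apply: U => // j; rewrite -!union_monomialE E.
rewrite det_esym_matrix raddf_sum (bigD1 sigma0) //= [X in _ + X]big1 ?addr0; last first.
  move=> sigma ne_sigma; rewrite raddf_sum big1 // => S /choice_familyP VS.
  rewrite /= mcoeff_signed_monomial; case: eqP => [/(other _ _ VS) [E _]|]; last by rewrite mulr0.
  by rewrite E eqxx in ne_sigma.
rewrite raddf_sum (bigD1 S0) /=; last exact/choice_familyP.
rewrite [X in _ + X]big1 ?addr0 /= ?mcoeff_signed_monomial ?eqxx ?mulr1 //.
move=> S /andP [/choice_familyP VS ne_S].
rewrite /= mcoeff_signed_monomial; case: eqP => [/(other _ _ VS) [_ E]|]; last by rewrite mulr0.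
by rewrite E eqxx in ne_S.
Qed.

(* If every coordinate j avoids some Z i, then j lies in at most k - 1 of the
   chosen sets, so every variable has degree at most k - 1 in the determinant. *)
Lemma var_degree_det_esym_matrix : (forall j, exists i, j \notin Z i) ->
  var_degree_le k.-1 (\det esym_matrix).
Proof.
move=> HZ m; rewrite det_esym_matrix => /msupp_sum_le /flattenP [sl /mapP [sigma _ ->]].
move=> /msupp_sum_le /flattenP [sl' /mapP [S]]; rewrite mem_filter.
case/andP => /choice_familyP VS _ -> Hm j.
have -> : m = union_monomial S.
  move: Hm; rewrite mulr_sign; case: (odd_perm sigma).
    by rewrite (perm_mem (msuppN _)) msuppX inE => /eqP.
  by rewrite msuppX inE => /eqP.
rewrite union_monomialE /mult_union; case: (HZ j) => i0 Hi0.
have : [set i | j \in S i] \subset [set~ i0].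
  apply/subsetP => i; rewrite !inE; apply: contraTneq => ->.
  by apply: contra Hi0; case: (VS i0) => /subsetP H _ /H.
by move/subset_leq_card; rewrite cardsC1 card_ord.
Qed.

End EsymMatrix.

Section SignedVandermonde.
Variables (F : fieldType) (k n : nat) (al : 'I_n -> F).

(* Row s of this matrix evaluates the monomial (-1)^s X^(k-1-s) at the points
   al j, so u *m V lists the values at the al j of a polynomial of degree < k. *)
Definition signed_vandermonde : 'M[F]_(k, n) :=
  \matrix_(s, j) ((-1) ^+ s * al j ^+ (k.-1 - s)).

Definition zero_set (c : 'rV[F]_n) : {set 'I_n} := [set j | c 0 j == 0].

(* A nonzero polynomial of degree < k has at most k - 1 roots among the
   distinct points al j. *)
Lemma zero_set_vandermonde (w : 'rV[F]_k) : injective al -> w != 0 ->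
  (#|zero_set (w *m signed_vandermonde)| <= k.-1)%N.
Proof.
move=> ali w0.
pose g : {poly F} := \sum_(s < k) (w 0 s * (-1) ^+ s) *: 'X^(k.-1 - s).
have Eg j : (w *m signed_vandermonde) 0 j = g.[al j].
  rewrite !mxE horner_sum; apply: eq_bigr => s _.
  by rewrite mxE hornerZ hornerXn mulrA.
have g0 : g != 0.
  case/rV0Pn: w0 => s1 Hs1; apply/eqP => /(congr1 (fun p : {poly F} => p`_(k.-1 - s1))).
  rewrite coef0 coef_sum (bigD1 s1) //= big1 ?addr0.
    by rewrite coefZ coefXn eqxx mulr1 => /eqP; rewrite mulf_eq0 signr_eq0 orbF (negbTE Hs1).
  move=> s Hs; rewrite coefZ coefXn; case: eqP => [E|]; last by rewrite mulr0.
  by case/eqP: Hs; apply: val_inj; move: (ltn_ord s) (ltn_ord s1) E => /=; lia.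
have sg : (size g <= k)%N.
  apply: (leq_trans (size_sum _ _ _)); apply/bigmax_leqP => s _.
  apply: (leq_trans (size_scale_leq _ _)); rewrite size_polyXn.
  by move: (ltn_ord s); lia.
set Zs := zero_set _.
have Ha : all (root g) [seq al j | j <- enum Zs].
  by apply/allP => x /mapP [j]; rewrite mem_enum inE Eg => /eqP H ->; apply/eqP.
have U : uniq [seq al j | j <- enum Zs] by rewrite (map_inj_uniq ali) enum_uniq.
have := max_poly_roots g0 Ha U; rewrite size_map -cardE => H.
by move: (leq_trans H sg); case: (k).
Qed.

Lemma esym_vandermonde_entry (Z : 'I_k -> {set 'I_n}) i j :
  (forall i, #|Z i| = k.-1) ->
  (map_mx (meval al) (esym_matrix F Z) *m signed_vandermonde) i j =
  \prod_(z in Z i) (al j - al z).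
Proof.
move=> HZ; rewrite prod_subr_subsets HZ mxE.
rewrite (partition_big (fun S : {set 'I_n} => (insubd i #|S| : 'I_k)) xpredT) //=.
apply: eq_bigr => s _; rewrite !mxE rmorph_sum big_distrl /=.
apply: eq_big => [S|S /andP [SZ /eqP Ss]].
  case SZ : (S \subset Z i) => //=.
  have Sk : (#|S| < k)%N by have := subset_leq_card SZ; rewrite HZ; have := ltn_ord i; lia.
  apply/eqP/eqP => [E|E]; first by apply: val_inj; rewrite /= val_insubd Sk E.
  by rewrite -E val_insubd Sk.
rewrite mevalX Ss mulrC; congr (_ * _).
rewrite [RHS]big_mkcond; apply: eq_bigr => z _; rewrite /mesym1 mnmE.
by case: (z \in S); rewrite ?expr1 ?expr0.
Qed.

End SignedVandermonde.

Lemma hweight_zero_set (F : fieldType) n (c : 'rV[F]_n) :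
  hweight c = (n - #|zero_set c|)%N.
Proof.
rewrite /hweight (_ : [set j | c 0 j != 0] = ~: zero_set c); last by apply/setP => j; rewrite !inE.
have E := cardsC (zero_set c); rewrite card_ord in E.
by rewrite -[X in (X - _)%N]E addKn.
Qed.

Lemma MDS_generator_of_zero_bound (F : fieldType) k n (G : 'M[F]_(k, n)) :
  (k <= n)%N ->
  (forall u : 'rV[F]_k, u != 0 -> (#|zero_set (u *m G)| <= k.-1)%N) ->
  (exists i, (hweight (row i G) <= n - k + 1)%N) ->
  MDS_generator G.
Proof.
move=> kn Hzero [i Hi].
have Hk : (0 < k)%N by apply: leq_ltn_trans (ltn_ord i).
have weight_bound c : (c <= G)%MS -> c != 0 -> (n - k + 1 <= hweight c)%N.
  case/submxP => u -> c0; rewrite hweight_zero_set.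
  have u0 : u != 0 by apply: contra_neq c0 => ->; rewrite mul0mx.
  have := Hzero u u0; lia.
have rfG : row_free G.
  apply: inj_row_free => u Hu; apply/eqP; apply: contraT => u0.
  have := Hzero u u0; rewrite Hu.
  have -> : zero_set (0 : 'rV[F]_n) = setT by apply/setP => j; rewrite !inE mxE eqxx.
  by rewrite cardsT card_ord; lia.
have row0 : row i G != 0.
  rewrite rowE mulmx_free_eq0 //; apply/eqP => /matrixP /(_ 0 i).
  by rewrite !mxE !eqxx => /eqP; rewrite oner_eq0.
split=> //; split=> //; exists (row i G); first by split=> //; exact: row_sub.
by apply/eqP; rewrite eqn_leq Hi weight_bound ?row_sub.
Qed.

Lemma MDS_generator_vanishing_on (F : finFieldType) k n (Z : 'I_k -> {set 'I_n}) :
  (1 <= k <= n)%N -> (forall i, #|Z i| = k.-1) -> (forall j, exists i, j \notin Z i) ->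
  unique_multiset_union Z -> (n + k - 1 <= #|F|)%N ->
  exists G : 'M[F]_(k, n), (forall i j, j \in Z i -> G i j = 0) /\ MDS_generator G.
Proof.
move=> /andP [k1 kn] HZ Hcover HU HF.
have [al [ali det_al]] : exists al : 'I_n -> F, injective al /\ (\det (esym_matrix F Z)).@[al] != 0.
  have room : (k.-1 + n <= #|F|)%N by lia.
  exact: nonvanishing_at_distinct_points room (det_esym_matrix_neq0 F HU)
    (var_degree_det_esym_matrix (R := F) Hcover).
pose C := map_mx (meval al) (esym_matrix F Z).
have Cu : C \in unitmx by rewrite unitmxE unitfE det_map_mx.
pose G := C *m signed_vandermonde k al.
have GE i j : G i j = \prod_(z in Z i) (al j - al z) by apply: esym_vandermonde_entry.
have G_vanish i j : j \in Z i -> G i j = 0 by move=> jZ; rewrite GE (bigD1 j) //= subrr mul0r.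
exists G; split => //; apply: MDS_generator_of_zero_bound => //.
  move=> u u0; rewrite mulmxA; apply: zero_set_vandermonde => //.
  by apply: contra u0 => /eqP uC0; rewrite -(mulmxK Cu u) uC0 mul0mx.
exists (Ordinal k1); rewrite hweight_zero_set.
have : Z (Ordinal k1) \subset zero_set (row (Ordinal k1) G).
  by apply/subsetP => j jZ; rewrite inE mxE G_vanish.
move/subset_leq_card; rewrite HZ => /(leq_sub2l n) /leq_trans; apply; lia.
Qed.

Lemma zero_row_card k n (M : 'M[bool]_(k, n)) i :
  (k <= n)%N -> #|supp_row M i| = (n - k + 1)%N -> #|zero_row M i| = k.-1.
Proof.
move=> kn Hw; have := cardsC (supp_row M i); rewrite card_ord Hw.
have -> : ~: supp_row M i = zero_row M i by apply/setP => j; rewrite !inE.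
lia.
Qed.

Lemma MDS_condition_zero_rows k n (M : 'M[bool]_(k, n)) :
  (k <= n)%N -> MDS_condition M ->
  forall I : {set 'I_k}, I != set0 -> (#|\bigcap_(i in I) zero_row M i| <= k - #|I|)%N.
Proof.
move=> kn Hmds I I0.
have -> : \bigcap_(i in I) zero_row M i = ~: \bigcup_(i in I) supp_row M i.
  apply/setP => j; rewrite in_setC; apply/bigcapP/negP => [H /bigcupP [i iI]|H i iI].
    by rewrite !inE => Mij; move: (H i iI); rewrite inE Mij.
  by rewrite inE; apply/negP => Mij; apply: H; apply/bigcupP; exists i; rewrite ?inE.
have := Hmds I I0; have := cardsC (\bigcup_(i in I) supp_row M i).
have := max_card I; rewrite !card_ord; lia.
Qed.

(* In particular (taking I = [k]) every coordinate avoids some zero set. *)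
Lemma zero_rows_cover k n (M : 'M[bool]_(k, n)) :
  (1 <= k <= n)%N -> MDS_condition M -> forall j, exists i, j \notin zero_row M i.
Proof.
move=> /andP [k1 kn] Hmds j; apply/existsP; apply: contraT => /existsPn Hj.
have T0 : [set: 'I_k] != set0 by apply/set0Pn; exists (Ordinal k1).
have : j \in \bigcap_(i in [set: 'I_k]) zero_row M i.
  by apply/bigcapP => i _; move: (Hj i); rewrite negbK.
have := MDS_condition_zero_rows kn Hmds T0.
by rewrite cardsT card_ord subnn leqn0 cards_eq0 => /eqP ->; rewrite inE.
Qed.

Lemma fitting_MDS_generator (n k : nat) (M : 'M[bool]_(k, n)) :
  (1 <= k <= n)%N ->
  (forall i, #|supp_row M i| = (n - k + 1)%N) ->
  MDS_condition M ->
  unique_multiset_union (zero_row M) ->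
  forall F : finFieldType, (n + k - 1 <= #|F|)%N ->
    exists G : 'M[F]_(k, n), fits G M /\ MDS_generator G.
Proof.
move=> Hkn Hw Hmds HU F HF; have /andP [_ kn] := Hkn.
have [G [G_vanish HG]] := MDS_generator_vanishing_on Hkn (fun i => zero_row_card kn (Hw i))
  (zero_rows_cover Hkn Hmds) HU HF.
by exists G; split => // i j Mij; apply: G_vanish; rewrite inE.
Qed.

Local Close Scope ring_scope.

Theorem lemma3 :
  (forall (n k : nat) (M : 'M[bool]_(k, n)),
     (1 <= k <= n)%N ->
     (forall i, #|supp_row M i| = (n - k + 1)%N) ->
     MDS_condition M ->
     unique_multiset_union (zero_row M) ->
     forall F : finFieldType, (n + k - 1 <= #|F|)%N ->
       exists G : 'M[F]_(k, n), fits G M /\ MDS_generator G)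
  /\
  ((forall (n k : nat), (1 <= k <= n)%N ->
      forall Z : 'I_k -> {set 'I_n},
        (forall i, #|Z i| = (k - 1)%N) ->
        (forall I : {set 'I_k}, I != set0 ->
           (#|\bigcap_(i in I) Z i| <= k - #|I|)%N) ->
        unique_multiset_union Z) ->
   forall (n k : nat) (M : 'M[bool]_(k, n)),
     (1 <= k <= n)%N ->
     (forall i, #|supp_row M i| = (n - k + 1)%N) ->
     MDS_condition M ->
     forall F : finFieldType, (n + k - 1 <= #|F|)%N ->
       exists G : 'M[F]_(k, n), fits G M /\ MDS_generator G).
Proof.
split; first exact: fitting_MDS_generator.
move=> every_family_unique n k M Hkn Hw Hmds; have /andP [_ kn] := Hkn.
apply: fitting_MDS_generator => //; apply: every_family_unique => //.
- by move=> i; rewrite subn1; apply: zero_row_card.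
- exact: MDS_condition_zero_rows.
Qed.
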